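(* Let $\mathfrak A\subseteq\mathcal B(\mathcal H)$ be a von Neumann algebra and $T\in\mathfrak A$. Let $E\in\mathfrak A$ be a projection such that $ETE-E$ is invertible in $E\mathfrak A E$. Then for every $A\in(I-E)\mathfrak A E$ there exists an idempotent $P\in\mathfrak A$ such that (1) $\mathcal K(P)=I-E$; (2) $\|P\|\le 1+\|TE\|+\|A\|(\|TE\|+1)$; (3) $\operatorname{Ran}((T-P)E)=\{\xi+A\xi:\ \xi\in E\mathcal H\}$.
   Context: For $S\in\mathcal B(\mathcal H)$, $\mathcal K(S)$ denotes the orthogonal projection onto $\ker S$, and $\operatorname{Ran}(S)=\{S\xi:\xi\in\mathcal H\}$. *)

From HB Require Import structures.
From mathcomp Require Import all_boot all_order all_algebra.
From mathcomp Require Import complex.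
From mathcomp Require Import boolp classical_sets reals.
Set Implicit Arguments. Unset Strict Implicit. Unset Printing Implicit Defensive.
Import Order.TTheory GRing.Theory Num.Theory.
Local Open Scope ring_scope.
Local Open Scope classical_set_scope.

Record hilbert (R : realType) (H : lmodType R[i]) := Hilbert {
  ip : H -> H -> R[i];
  ip_linl : forall (a : R[i]) (x y z : H), ip (a *: x + y) z = a * ip x z + ip y z;
  ip_conj : forall x y : H, ip y x = conjc (ip x y);
  ip_ge0 : forall x : H, 0 <= complex.Re (ip x x);
  ip_def : forall x : H, ip x x = 0 -> x = 0;
  ip_complete : forall u : nat -> H,
    (forall e : R, 0 < e -> exists N : nat, forall m n : nat, (N <= m)%N -> (N <= n)%N ->
        Num.sqrt (complex.Re (ip (u m - u n) (u m - u n))) < e) ->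
    exists l : H, forall e : R, 0 < e -> exists N : nat, forall n : nat, (N <= n)%N ->
        Num.sqrt (complex.Re (ip (u n - l) (u n - l))) < e
}.

Section Ops.
Variables (R : realType) (H : lmodType R[i]) (HS : hilbert H).

Definition hnorm (x : H) : R := Num.sqrt (complex.Re (ip HS x x)).

Definition bounded_op (S : H -> H) : Prop :=
  (forall (a : R[i]) (x y : H), S (a *: x + y) = a *: S x + S y) /\
  (exists M : R, forall x : H, hnorm (S x) <= M * hnorm x).

Definition opid : H -> H := fun x => x.
Definition opadd (S T : H -> H) : H -> H := fun x => S x + T x.
Definition opsub (S T : H -> H) : H -> H := fun x => S x - T x.
Definition opscale (a : R[i]) (S : H -> H) : H -> H := fun x => a *: S x.

Definition adjoint_of (S S' : H -> H) : Prop :=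
  forall x y : H, ip HS (S x) y = ip HS x (S' y).

Definition opnorm (S : H -> H) : R :=
  sup [set hnorm (S x) | x in [set x : H | hnorm x <= 1]].

Definition commutant (Alg : set (H -> H)) : set (H -> H) :=
  [set S | bounded_op S /\ forall X, Alg X -> S \o X = X \o S].

Definition von_neumann_algebra (Alg : set (H -> H)) : Prop :=
  (forall S, Alg S -> bounded_op S) /\
  Alg opid /\
  (forall S T, Alg S -> Alg T -> Alg (opadd S T)) /\
  (forall a S, Alg S -> Alg (opscale a S)) /\
  (forall S T, Alg S -> Alg T -> Alg (S \o T)) /\
  (forall S, Alg S -> exists S', Alg S' /\ adjoint_of S S') /\
  Alg = commutant (commutant Alg).

Definition is_projection (Q : H -> H) : Prop := Q \o Q = Q /\ adjoint_of Q Q.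

Definition kernel (S : H -> H) : set H := [set x | S x = 0].
Definition Ran (S : H -> H) : set H := [set S x | x in setT].

(* is_ker_proj S Q  <->  Q = K(S), the orthogonal projection onto ker S *)
Definition is_ker_proj (S Q : H -> H) : Prop :=
  is_projection Q /\ Ran Q = kernel S.

End Ops.

Arguments opid {R H}.

(* With W := ETE - E, set P := TE - (E + A)W.  Since W = WE and EW = W while
   EA = 0, we get PE = P and EP = E, so P is idempotent, P x = 0 iff E x = 0,
   and (T - P)E = (E + A)W.  The invertibility of W in E Alg E makes W map
   E H onto E H, which gives the range of (T - P)E.  Finally
   P = (I - E)TE + E - AW, and each of the three terms is bounded by the
   corresponding term of the norm estimate. *)
From HB Require Import structures.
From mathcomp Require Import all_boot all_order all_algebra.
From mathcomp Require Import complex.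
From mathcomp Require Import boolp classical_sets reals.
From mathcomp Require Import lra ring.
Import Order.TTheory GRing.Theory Num.Theory.
Local Open Scope ring_scope.
Local Open Scope classical_set_scope.
Set Implicit Arguments. Unset Strict Implicit.

Section ComplexScalars.
Variable R : realType.

Lemma Re_conjc (x : R[i]) : complex.Re (conjc x) = complex.Re x.
Proof. by case: x. Qed.

Lemma Re_realCM (r : R) (x : R[i]) : complex.Re ((r%:C)%C * x) = r * complex.Re x.
Proof. by case: x => a b /=; rewrite mul0r subr0. Qed.

Lemma conjc_fixed_real (x : R[i]) : conjc x = x -> x = ((complex.Re x)%:C)%C.
Proof. by case: x => a b /= [] b_opp; congr Complex; lra. Qed.

End ComplexScalars.

Section LinearFun.
Variables (K : pzRingType) (V : lmodType K) (S : V -> V).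
Hypothesis linS : linear S.

Let Sl : {linear V -> V} := HB.pack S (GRing.isLinear.Build _ _ _ _ S linS).

Lemma linear_fun0 : S 0 = 0. Proof. exact: (raddf0 Sl). Qed.
Lemma linear_funD x y : S (x + y) = S x + S y. Proof. exact: (raddfD Sl). Qed.
Lemma linear_funB x y : S (x - y) = S x - S y. Proof. exact: (raddfB Sl). Qed.
Lemma linear_funZ a x : S (a *: x) = a *: S x. Proof. exact: (linearZ_LR Sl). Qed.

End LinearFun.

Section InnerProduct.
Variables (R : realType) (H : lmodType R[i]) (HS : hilbert H).
Local Notation ip := (ip HS).
Local Notation hnorm := (hnorm HS).

Let ipl z : {scalar H} :=
  HB.pack (ip^~ z) (GRing.isLinear.Build _ _ _ _ (ip^~ z) (fun a x y => ip_linl HS a x y z)).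

Lemma ip0l z : ip 0 z = 0. Proof. exact: (raddf0 (ipl z)). Qed.
Lemma ipDl x y z : ip (x + y) z = ip x z + ip y z. Proof. exact: (raddfD (ipl z)). Qed.
Lemma ipNl x z : ip (- x) z = - ip x z. Proof. exact: (raddfN (ipl z)). Qed.
Lemma ipBl x y z : ip (x - y) z = ip x z - ip y z. Proof. exact: (raddfB (ipl z)). Qed.
Lemma ipZl a x z : ip (a *: x) z = a * ip x z. Proof. exact: (linearZ_LR (ipl z)). Qed.

Lemma ip0r z : ip z 0 = 0.
Proof. by rewrite ip_conj ip0l conjc0. Qed.
Lemma ipDr x y z : ip x (y + z) = ip x y + ip x z.
Proof. by rewrite !(ip_conj HS _ x) ipDl raddfD. Qed.
Lemma ipNr x y : ip x (- y) = - ip x y.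
Proof. by rewrite !(ip_conj HS _ x) ipNl raddfN. Qed.
Lemma ipBr x y z : ip x (y - z) = ip x y - ip x z.
Proof. by rewrite ipDr ipNr. Qed.

Definition rip (x y : H) : R := complex.Re (ip x y).

Lemma ripDl x y z : rip (x + y) z = rip x z + rip y z.
Proof. by rewrite /rip ipDl raddfD. Qed.
Lemma ripDr x y z : rip x (y + z) = rip x y + rip x z.
Proof. by rewrite /rip ipDr raddfD. Qed.
Lemma ripNl x z : rip (- x) z = - rip x z.
Proof. by rewrite /rip ipNl raddfN. Qed.
Lemma ripNr x z : rip x (- z) = - rip x z.
Proof. by rewrite /rip ipNr raddfN. Qed.
Lemma ripC x y : rip x y = rip y x.
Proof. by rewrite /rip (ip_conj HS x y) Re_conjc. Qed.
Lemma ripZl (r : R) x z : rip ((r%:C)%C *: x) z = r * rip x z.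
Proof. by rewrite /rip ipZl Re_realCM. Qed.
Lemma ripZr (r : R) x z : rip x ((r%:C)%C *: z) = r * rip x z.
Proof. by rewrite ripC ripZl ripC. Qed.
Lemma rip_ge0 x : 0 <= rip x x.
Proof. exact: ip_ge0. Qed.

Lemma rip_Cauchy_Schwarz x y : rip x y ^+ 2 <= rip x x * rip y y.
Proof.
set a := rip x x; set b := rip x y; set c := rip y y.
have quad_ge0 t : 0 <= a + t * b + t * (b + t * c).
  have := rip_ge0 (x + (t%:C)%C *: y).
  by rewrite ripDl !ripDr ripZr ripZl ripZr ripZl (ripC y x) mulrDr addrA.
have c_ge0 : 0 <= c by exact: rip_ge0.
have [c0|c_neq0] := eqVneq c 0.
  (* For c = 0 the form is affine in t, so it can only stay >= 0 if b = 0. *)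
  have [->|b_neq0] := eqVneq b 0; first by rewrite c0 expr0n mulr0.
  have := quad_ge0 (- (a + 1) / (2 * b)); rewrite c0 !mulr0 addr0.
  have -> : a + - (a + 1) / (2 * b) * b + - (a + 1) / (2 * b) * b = -1.
    by field; rewrite ?mulf_neq0 ?pnatr_eq0.
  by rewrite ler0N1.
have := mulr_ge0 c_ge0 (quad_ge0 (- b / c)).
have -> : c * (a + - b / c * b + - b / c * (b + - b / c * c)) = a * c - b ^+ 2.
  by field.
by rewrite subr_ge0.
Qed.

Lemma hnorm_ge0 x : 0 <= hnorm x.
Proof. exact: sqrtr_ge0. Qed.

Lemma hnorm0 : hnorm 0 = 0.
Proof. by rewrite /hnorm ip0l sqrtr0. Qed.

Lemma hnormE x : hnorm x = Num.sqrt (rip x x).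
Proof. by []. Qed.

Lemma hnormD x y : hnorm (x + y) <= hnorm x + hnorm y.
Proof.
rewrite !hnormE.
have nx_ge0 := sqrtr_ge0 (rip x x); have ny_ge0 := sqrtr_ge0 (rip y y).
rewrite -(ger0_norm (addr_ge0 nx_ge0 ny_ge0)) -sqrtr_sqr ler_sqrt ?sqr_ge0 //.
rewrite ripDl !ripDr (ripC y x) sqrrD !sqr_sqrtr ?rip_ge0 //.
have : rip x y <= Num.sqrt (rip x x) * Num.sqrt (rip y y).
  rewrite -sqrtrM ?rip_ge0 // (le_trans (ler_norm _)) //.
  by rewrite -sqrtr_sqr ler_sqrt ?rip_Cauchy_Schwarz // mulr_ge0 ?rip_ge0.
lra.
Qed.

Lemma hnormN x : hnorm (- x) = hnorm x.
Proof. by rewrite !hnormE ripNl ripNr opprK. Qed.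

Lemma hnormB x y : hnorm (x - y) <= hnorm x + hnorm y.
Proof. by rewrite -(hnormN y) hnormD. Qed.

Lemma hnormZ (r : R) x : hnorm ((r%:C)%C *: x) = `|r| * hnorm x.
Proof. by rewrite !hnormE ripZl ripZr mulrA -expr2 sqrtrM ?sqr_ge0 // sqrtr_sqr. Qed.

Lemma hnorm_eq0 x : hnorm x = 0 -> x = 0.
Proof.
move=> /eqP; rewrite sqrtr_eq0 => rip_le0.
have rip0 : rip x x = 0 by apply/eqP; rewrite eq_le rip_le0 rip_ge0.
apply: (@ip_def _ _ HS x).
by rewrite (conjc_fixed_real (esym (ip_conj HS x x))) -/(rip x x) rip0.
Qed.

Lemma rip_orth_sqr u w : rip u w = 0 -> rip (u + w) (u + w) = rip u u + rip w w.
Proof. by move=> uw0; rewrite ripDl !ripDr uw0 (ripC w u) uw0 addr0 add0r. Qed.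

Lemma rip_proj_split (Q : H -> H) v : linear Q -> is_projection HS Q ->
  rip v v = rip (Q v) (Q v) + rip (v - Q v) (v - Q v).
Proof.
move=> linQ [QQ Q_sa].
have orth : rip (Q v) (v - Q v) = 0.
  have QQv : Q (Q v) = Q v by rewrite -[in RHS]QQ.
  by rewrite /rip Q_sa linear_funB // QQv subrr ip0r.
by rewrite -(rip_orth_sqr orth) addrC subrK.
Qed.

Lemma hnorm_proj_le (Q : H -> H) v : linear Q -> is_projection HS Q ->
  hnorm (Q v) <= hnorm v.
Proof.
move=> linQ Qp; rewrite !hnormE ler_sqrt ?rip_ge0 // (rip_proj_split v linQ Qp).
by rewrite lerDl rip_ge0.
Qed.

Lemma hnorm_proj_compl_le (Q : H -> H) v : linear Q -> is_projection HS Q ->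
  hnorm (v - Q v) <= hnorm v.
Proof.
move=> linQ Qp; rewrite !hnormE ler_sqrt ?rip_ge0 // (rip_proj_split v linQ Qp).
by rewrite lerDr rip_ge0.
Qed.

Lemma is_projection_compl (Q : H -> H) : linear Q -> is_projection HS Q ->
  is_projection HS (opsub opid Q).
Proof.
move=> linQ [QQ Q_sa]; split.
  apply: funext => x; have QQx : Q (Q x) = Q x by rewrite -[in RHS]QQ.
  by rewrite /opsub /opid /= linear_funB // QQx subrr subr0.
by move=> x y; rewrite /opsub /opid ipBl ipBr Q_sa.
Qed.

End InnerProduct.

Section OperatorNorm.
Variables (R : realType) (H : lmodType R[i]) (HS : hilbert H).
Local Notation hnorm := (hnorm HS).
Local Notation opnorm := (opnorm HS).

Lemma opnorm_le (S : H -> H) b :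
  (forall x, hnorm x <= 1 -> hnorm (S x) <= b) -> opnorm S <= b.
Proof.
move=> S_le; apply: ge_sup; last by move=> _ [x /= x_le1 <-]; apply: S_le.
by exists (hnorm (S 0)), 0; rewrite //= hnorm0 ler01.
Qed.

Variable S : H -> H.
Hypothesis bS : bounded_op HS S.

Lemma opnorm_has_sup : has_sup [set hnorm (S x) | x in [set x | hnorm x <= 1]].
Proof.
have [_ [M S_le]] := bS; split.
  by exists (hnorm (S 0)), 0; rewrite //= hnorm0 ler01.
exists `|M| => _ [x /= x_le1 <-].
have := S_le x; have := hnorm_ge0 HS x; have := ler_norm M; have := normr_ge0 M.
nra.
Qed.

Lemma hnorm_le_opnorm x : hnorm x <= 1 -> hnorm (S x) <= opnorm S.
Proof. by move=> x_le1; apply: (sup_upper_bound opnorm_has_sup); exists x. Qed.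

Lemma opnorm_ge0 : 0 <= opnorm S.
Proof.
by apply: le_trans (hnorm_ge0 HS (S 0)) (hnorm_le_opnorm _); rewrite hnorm0 ler01.
Qed.

Lemma hnorm_op_le w : hnorm (S w) <= opnorm S * hnorm w.
Proof.
have linS : linear S by case: bS.
have [w0|w_neq0] := eqVneq (hnorm w) 0.
  by rewrite (hnorm_eq0 w0) linear_fun0 // hnorm0 mulr0.
have w_gt0 : 0 < hnorm w by rewrite lt_def w_neq0 hnorm_ge0.
have [u u_unit ->] : exists2 u, hnorm u = 1 & w = ((hnorm w)%:C)%C *: u.
  exists ((((hnorm w)^-1)%:C)%C *: w).
    by rewrite hnormZ ger0_norm ?invr_ge0 ?hnorm_ge0 // mulVf.
  by rewrite scalerA -rmorphM mulfV // scale1r.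
rewrite linear_funZ // !hnormZ ger0_norm ?hnorm_ge0 // u_unit mulr1 mulrC.
by rewrite ler_wpM2r ?(ltW w_gt0) // hnorm_le_opnorm // u_unit.
Qed.

End OperatorNorm.

Section OperatorIdentities.
Variables (R : realType) (H : lmodType R[i]).
Implicit Types P E V W : H -> H.

Lemma idem_of_comp P E : P \o E = P -> E \o P = E -> P \o P = P.
Proof. by move=> PE EP; rewrite -[in X in X \o _]PE -compA EP. Qed.

Lemma idem_comp_compl E x : linear E -> E \o E = E -> E (opsub opid E x) = 0.
Proof.
move=> linE EE; rewrite /opsub /opid linear_funB //.
by rewrite -[E (E x)]/((E \o E) x) EE subrr.
Qed.

Lemma kernel_eq_Ran_compl P E : linear P -> linear E ->
  P \o E = P -> E \o P = E -> kernel P = Ran (opsub opid E).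
Proof.
move=> linP linE PE EP; apply/seteqP; split => z /=.
  move=> Pz0; exists z => //; rewrite /opsub /opid.
  by rewrite -[E z](congr1 (@^~ z) EP) /= Pz0 linear_fun0 // subr0.
move=> [x _ <-]; rewrite /kernel /opsub /opid /= linear_funB //.
by rewrite -[P (E x)]/((P \o E) x) PE subrr.
Qed.

Lemma Ran_eq_of_factor E W V : E \o W = W -> W \o V = E -> Ran W = Ran E.
Proof.
move=> EW WV; apply/seteqP; split => _ [x _ <-].
  by exists (W x) => //; rewrite -[in RHS]EW.
by exists (V x) => //; rewrite -[in RHS]WV.
Qed.

End OperatorIdentities.

Section VonNeumannAlgebra.
Variables (R : realType) (H : lmodType R[i]) (HS : hilbert H).
Variable Alg : set (H -> H).
Hypothesis vN : von_neumann_algebra HS Alg.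

Lemma vna_bounded S : Alg S -> bounded_op HS S.
Proof. by case: vN => + _; apply. Qed.

Lemma vna_linear S : Alg S -> linear S.
Proof. by case/vna_bounded. Qed.

Lemma vna_opadd S U : Alg S -> Alg U -> Alg (opadd S U).
Proof. by have [_ [_ [addA _]]] := vN; apply: addA. Qed.

Lemma vna_comp S U : Alg S -> Alg U -> Alg (S \o U).
Proof. by have [_ [_ [_ [_ [compA _]]]]] := vN; apply: compA. Qed.

Lemma vna_opsub S U : Alg S -> Alg U -> Alg (opsub S U).
Proof.
have [_ [_ [_ [scaleA _]]]] := vN => AS AU.
have -> : opsub S U = opadd S (opscale (-1) U).
  by apply: funext => x; rewrite /opadd /opscale scaleN1r.
exact/vna_opadd/scaleA.
Qed.

Lemma vna_opid : Alg opid.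
Proof. by case: vN => _ []. Qed.

End VonNeumannAlgebra.

Definition shifted_compression (R : realType) (H : lmodType R[i]) (T E : H -> H) :=
  opsub (E \o T \o E) E.
Arguments shifted_compression : simpl never.

Section IdempotentLift.
Variables (R : realType) (H : lmodType R[i]) (T E A : H -> H).

Local Notation W := (shifted_compression T E).

Definition idem_lift : H -> H := opsub (T \o E) (opadd E A \o W).

Hypotheses (linE : linear E) (EE : E \o E = E).

Let EEx x : E (E x) = E x.
Proof. by rewrite -[in RHS]EE. Qed.

Let WEx x : W (E x) = W x.
Proof. by rewrite /shifted_compression /opsub /= !EEx. Qed.

Let EWx x : E (W x) = W x.
Proof. by rewrite /shifted_compression /opsub /= linear_funB // !EEx. Qed.

Lemma idem_lift_compE : idem_lift \o E = idem_lift.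
Proof.
by apply: funext => x; rewrite /idem_lift /opsub /opadd /= EEx WEx.
Qed.

Lemma E_comp_idem_lift : (forall x, E (A x) = 0) -> E \o idem_lift = E.
Proof.
move=> EA; apply: funext => x; rewrite /idem_lift /opsub /opadd /=.
rewrite linear_funB // linear_funD // EA addr0.
by rewrite !EWx /shifted_compression /opsub /= opprB addrC subrK.
Qed.

Lemma idem_lift_decomp x :
  idem_lift x = (T (E x) - E (T (E x))) + (E x - A (W x)).
Proof.
rewrite /idem_lift /opsub /opadd /= EWx.
by rewrite {1}/shifted_compression /opsub /= !opprD opprK !addrA.
Qed.

Lemma sub_idem_lift_compE : opsub T idem_lift \o E = opadd E A \o W.
Proof.
apply: funext => x; rewrite /opsub /= -[idem_lift (E x)]/((idem_lift \o E) x).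
by rewrite idem_lift_compE /idem_lift /opsub /= opprB addrCA subrr addr0.
Qed.

Lemma Ran_sub_idem_lift V : W \o V = E ->
  Ran (opsub T idem_lift \o E) = [set xi + A xi | xi in Ran E].
Proof.
move=> WV; have E_compW : E \o W = W by apply: funext => x; apply: EWx.
rewrite sub_idem_lift_compE -(Ran_eq_of_factor E_compW WV).
apply/seteqP; split => y /=.
  by move=> [x _ <-]; exists (W x); rewrite /opadd /= ?EWx //; exists x.
by move=> [_ [x _ <-] <-]; exists x; rewrite /opadd /= ?EWx.
Qed.

Variable HS : hilbert H.
Local Notation hnorm := (hnorm HS).
Local Notation opnorm := (opnorm HS).

Lemma opnorm_idem_lift_le : bounded_op HS (T \o E) -> bounded_op HS A ->
  is_projection HS E ->
  opnorm idem_lift <= 1 + opnorm (T \o E) + opnorm A * (opnorm (T \o E) + 1).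
Proof.
move=> bTE bA Ep; apply: opnorm_le => x x_le1.
have TEx_le : hnorm (T (E x)) <= opnorm (T \o E) by exact: hnorm_le_opnorm.
have Ex_le : hnorm (E x) <= 1 := le_trans (hnorm_proj_le x linE Ep) x_le1.
have W_le : hnorm (W x) <= opnorm (T \o E) + 1.
  apply: le_trans (hnormB _ _ _) _; apply: lerD Ex_le.
  exact: le_trans (hnorm_proj_le _ linE Ep) TEx_le.
have AW_le : hnorm (A (W x)) <= opnorm A * (opnorm (T \o E) + 1).
  exact: le_trans (hnorm_op_le bA _) (ler_wpM2l (opnorm_ge0 bA) W_le).
rewrite idem_lift_decomp; apply: le_trans (hnormD _ _ _) _.
have := hnorm_proj_compl_le (T (E x)) linE Ep.
have := hnormB HS (E x) (A (W x)).
lra.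
Qed.

End IdempotentLift.

Theorem proposition3p10 (R : realType) (H : lmodType R[i]) (HS : hilbert H)
  (Alg : set (H -> H)) (T E : H -> H) :
  von_neumann_algebra HS Alg -> Alg T -> Alg E -> is_projection HS E ->
  (* ETE - E is invertible in E Alg E (whose unit is E) *)
  (exists X, Alg X /\
     (E \o X \o E) \o opsub (E \o T \o E) E = E /\
     opsub (E \o T \o E) E \o (E \o X \o E) = E) ->
  forall A : H -> H,
  (* A in (I - E) Alg E *)
  (exists Y, Alg Y /\ A = opsub opid E \o Y \o E) ->
  exists P : H -> H,
    [/\ Alg P, P \o P = P,
        is_ker_proj HS P (opsub opid E),
        opnorm HS P <= 1 + opnorm HS (T \o E)
                       + opnorm HS A * (opnorm HS (T \o E) + 1) &
        Ran (opsub T P \o E) = [set xi + A xi | xi in Ran E]].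
Proof.
move=> vN AT AE Ep [X [_ [_ W_rinv]]] A [Y [AY A_def]].
have linE := vna_linear vN AE; have EE := Ep.1.
have AA : Alg A.
  by rewrite A_def; apply/(vna_comp vN)/AE/(vna_comp vN)/AY/(vna_opsub vN)/AE/(vna_opid vN).
have EA x : E (A x) = 0 by rewrite A_def idem_comp_compl.
have AP : Alg (idem_lift T E A).
  apply/(vna_opsub vN); first exact/(vna_comp vN).
  apply/(vna_comp vN); first exact/(vna_opadd vN).
  by apply/(vna_opsub vN)/AE/(vna_comp vN)/AE/(vna_comp vN).
have PE := idem_lift_compE T A EE; have EP := E_comp_idem_lift T linE EE EA.
exists (idem_lift T E A); split => //.
- exact: idem_of_comp PE EP.
- split; first exact: is_projection_compl.
  by rewrite (kernel_eq_Ran_compl (vna_linear vN AP) linE PE EP).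
- apply: opnorm_idem_lift_le => //; apply: (vna_bounded vN) => //.
  exact/(vna_comp vN).
- exact: Ran_sub_idem_lift W_rinv.
Qed.
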